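(* Let $\mathcal{A}$ and $\mathcal{B}$ be sharp qubit observables, with a priori probabilities $\eta$ for $\mathcal{A}$ and $1-\eta$ for $\mathcal{B}$, where $\eta\in[0,1]$, and let $P\in[0,1]$. The following are equivalent: (i) there is a unit vector $\psi\in\mathbb{C}^2\otimes\mathbb{C}^2$ such that $\langle\psi|\mathcal{B}_1\otimes\mathcal{B}_1+\mathcal{B}_2\otimes\mathcal{B}_2|\psi\rangle=0$ and $\eta\langle\psi|\mathcal{A}_1\otimes\mathcal{A}_1+\mathcal{A}_2\otimes\mathcal{A}_2|\psi\rangle=P$ (i.e. the result ''same outcomes'' leads to the conclusion that the apparatus is $\mathcal{A}$, with success probability $P$); (ii) there is a unit vector $\psi'\in\mathbb{C}^2\otimes\mathbb{C}^2$ such that $\langle\psi'|\mathcal{B}_1\otimes\mathcal{B}_2+\mathcal{B}_2\otimes\mathcal{B}_1|\psi'\rangle=0$ and $\eta\langle\psi'|\mathcal{A}_1\otimes\mathcal{A}_2+\mathcal{A}_2\otimes\mathcal{A}_1|\psi'\rangle=P$ (i.e. the result ''different outcomes'' leads to the conclusion that the apparatus is $\mathcal{A}$, with success probability $P$).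
   Context: A sharp qubit observable is given by a unit vector $\vec a\in\mathbb{R}^3$ and has two outcomes with effects $\mathcal{A}_1=\frac12(I+\vec a\cdot\vec\sigma)$, $\mathcal{A}_2=\frac12(I-\vec a\cdot\vec\sigma)$ on $\mathbb{C}^2$, where $\vec\sigma=(\sigma_x,\sigma_y,\sigma_z)$ are the Pauli matrices; similarly $\mathcal{B}_{1,2}=\frac12(I\pm\vec b\cdot\vec\sigma)$ with $\vec b$ a unit vector. In a two-shot experiment, the unknown apparatus (either $\mathcal{A}$ or $\mathcal{B}$, labels of outcomes unknown) is applied to each half of a probe state on $\mathbb{C}^2\otimes\mathbb{C}^2$, and one only observes whether the two outcomes are the same or different. *)

From HB Require Import structures.
From mathcomp Require Import all_boot all_order all_algebra.
From mathcomp Require Import complex mxtens.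
Set Implicit Arguments. Unset Strict Implicit. Unset Printing Implicit Defensive.
Import Order.TTheory GRing.Theory Num.Theory.
Local Open Scope ring_scope.
Local Open Scope complex_scope.

Section Qubit.
Variable R : rcfType.
Local Notation C := R[i].

Definition unit3 (a : 'rV[R]_3) : Prop := \sum_(k < 3) a 0 k ^+ 2 = 1.

Definition sigma_x : 'M[C]_2 := \matrix_(i < 2, j < 2) (if i == j then 0 else 1).
Definition sigma_y : 'M[C]_2 :=
  \matrix_(i < 2, j < 2)
    (if i == j then 0 else if (i : nat) == 0%N then - 'i else 'i).
Definition sigma_z : 'M[C]_2 :=
  \matrix_(i < 2, j < 2) (if i == j then (if (i : nat) == 0%N then 1 else -1) else 0).

Definition adots (a : 'rV[R]_3) : 'M[C]_2 :=
  (a 0 0)%:C *: sigma_x + (a 0 1)%:C *: sigma_y + (a 0 2)%:C *: sigma_z.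

(* the two effects of the sharp observable given by a:
   eff a true = (I + a.sigma)/2 (outcome 1), eff a false = (I - a.sigma)/2 (outcome 2) *)
Definition eff (a : 'rV[R]_3) (b : bool) : 'M[C]_2 :=
  2^-1 *: (1%:M + (if b then 1 else -1) *: adots a).

Definition cadj n (psi : 'cV[C]_n) : 'rV[C]_n := (map_mx conjc psi)^T.
Definition is_unit_vec n (psi : 'cV[C]_n) : Prop := (cadj psi *m psi) 0 0 = 1.
Definition expect n (psi : 'cV[C]_n) (M : 'M[C]_n) : C := (cadj psi *m M *m psi) 0 0.

Definition same_eff (a : 'rV[R]_3) : 'M[C]_(2 * 2) :=
  eff a true *t eff a true + eff a false *t eff a false.
Definition diff_eff (a : 'rV[R]_3) : 'M[C]_(2 * 2) :=
  eff a true *t eff a false + eff a false *t eff a true.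
End Qubit.

(* Take a unit vector n orthogonal to both a and b, and let W = I (x) n.sigma.
   Since (n.sigma) (x.sigma) (n.sigma) = - x.sigma whenever n is orthogonal to x,
   conjugation by n.sigma exchanges the two effects of the observables given by a
   and b, so W exchanges the "same" and "different" effects of both apparatuses.
   W is a Hermitian unitary, hence psi |-> W psi carries a witness of (i) to a
   witness of (ii) and back. *)

From HB Require Import structures.
From mathcomp Require Import all_boot all_order all_algebra.
From mathcomp Require Import complex mxtens.
From mathcomp Require Import ring lra.
Set Implicit Arguments. Unset Strict Implicit. Unset Printing Implicit Defensive.
Import Order.TTheory GRing.Theory Num.Theory.
Local Open Scope ring_scope.
Local Open Scope complex_scope.

Section Conclusive.
Variable R : rcfType.
Local Notation C := R[i].

Definition madj m n (M : 'M[C]_(m, n)) : 'M[C]_(n, m) := (map_mx conjc M)^T.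

Lemma madjM m n p (A : 'M[C]_(m, n)) (B : 'M[C]_(n, p)) :
  madj (A *m B) = madj B *m madj A.
Proof. by rewrite /madj map_mxM trmx_mul. Qed.

Lemma madj1 n : madj (1%:M : 'M[C]_n) = 1%:M.
Proof. by rewrite /madj map_mx1 trmx1. Qed.

Lemma madj_tens m n p q (A : 'M[C]_(m, n)) (B : 'M[C]_(p, q)) :
  madj (A *t B) = madj A *t madj B.
Proof. by rewrite /madj map_mxT trmx_tens. Qed.

Lemma expect_mulmx n (U : 'M[C]_n) (psi : 'cV[C]_n) M :
  expect (U *m psi) M = expect psi (madj U *m M *m U).
Proof. by rewrite /expect /cadj -[(map_mx _ _)^T]/(madj _) madjM !mulmxA. Qed.

Lemma is_unit_vec_mulmx n (U : 'M[C]_n) (psi : 'cV[C]_n) :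
  madj U *m U = 1%:M -> is_unit_vec (U *m psi) <-> is_unit_vec psi.
Proof.
move=> unitaryU; rewrite /is_unit_vec /cadj -[(map_mx _ (_ *m _))^T]/(madj _).
by rewrite madjM -mulmxA (mulmxA _ U) unitaryU mul1mx.
Qed.

(* Conditions (i) and (ii) of the theorem, for the effects [Mb] and [Ma] that the
   observed result has under the apparatuses B and A. *)
Definition conclusive n (eta P : R) (Mb Ma : 'M[C]_n) : Prop :=
  exists psi, is_unit_vec psi /\ expect psi Mb = 0 /\ eta%:C * expect psi Ma = P%:C.

Lemma conclusive_unitary n (U : 'M[C]_n) eta P Mb Ma Nb Na :
  madj U *m U = 1%:M -> madj U *m Nb *m U = Mb -> madj U *m Na *m U = Ma ->
  conclusive eta P Mb Ma -> conclusive eta P Nb Na.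
Proof.
move=> unitaryU <- <- [psi [unit_psi [Eb Ea]]]; exists (U *m psi).
by rewrite is_unit_vec_mulmx // !expect_mulmx.
Qed.

End Conclusive.

Section Orthogonal.
Variable R : rcfType.

Definition dot3 (u v : 'rV[R]_3) : R := u 0 0 * v 0 0 + u 0 1 * v 0 1 + u 0 2 * v 0 2.

Definition mk3 (x y z : R) : 'rV[R]_3 := \row_(j < 3) nth 0 [:: x; y; z] j.

Lemma dot3_mk3 x y z v : dot3 (mk3 x y z) v = x * v 0 0 + y * v 0 1 + z * v 0 2.
Proof. by rewrite /dot3 !mxE. Qed.

Lemma dot3_ge0 u : 0 <= dot3 u u.
Proof. rewrite /dot3; nra. Qed.

Lemma dot3_eq0 u : dot3 u u = 0 -> [/\ u 0 0 = 0, u 0 1 = 0 & u 0 2 = 0].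
Proof. by rewrite /dot3 => uu0; split; nra. Qed.

Lemma unit3_dot3 u : unit3 u -> dot3 u u = 1.
Proof.
rewrite /unit3 => <-; rewrite /dot3 !big_ord_recr big_ord0 /= add0r -!expr2.
by congr (_ + _ + _); congr (u 0 _ ^+ 2); apply: val_inj.
Qed.

Lemma normalize_orthogonal m a b : dot3 m m != 0 -> dot3 m a = 0 -> dot3 m b = 0 ->
  exists u, [/\ dot3 u u = 1, dot3 u a = 0 & dot3 u b = 0].
Proof.
move=> mm0 ma0 mb0; pose k := (Num.sqrt (dot3 m m))^-1; exists (k *: m).
have dotZ v : dot3 (k *: m) v = k * dot3 m v by rewrite /dot3 !mxE; ring.
have dotZZ : dot3 (k *: m) (k *: m) = k ^+ 2 * dot3 m m by rewrite /dot3 !mxE; ring.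
by rewrite dotZZ !dotZ ma0 mb0 mulr0 /k exprVn sqr_sqrtr ?dot3_ge0 // mulVf.
Qed.

(* If a and b are parallel, then some cross product of a with a coordinate vector
   is nonzero, because the squared norms of the three add up to 2 |a|^2. *)
Lemma exists_unit_orthogonal2 a b : dot3 a a != 0 ->
  exists u, [/\ dot3 u u = 1, dot3 u a = 0 & dot3 u b = 0].
Proof.
move=> aa0.
pose c := mk3 (a 0 1 * b 0 2 - a 0 2 * b 0 1) (a 0 2 * b 0 0 - a 0 0 * b 0 2)
              (a 0 0 * b 0 1 - a 0 1 * b 0 0).
have [cc0|] := eqVneq (dot3 c c) 0; last first.
  by move/normalize_orthogonal; apply; rewrite dot3_mk3 ?mxE /=; ring.
have [c0 c1 c2] := dot3_eq0 cc0.
pose p0 := mk3 0 (- a 0 2) (a 0 1).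
pose p1 := mk3 (a 0 2) 0 (- a 0 0).
pose p2 := mk3 (- a 0 1) (a 0 0) 0.
have [p00|] := eqVneq (dot3 p0 p0) 0; last first.
  move/normalize_orthogonal; apply; rewrite dot3_mk3; first by ring.
  by rewrite -[RHS]c0 /c !mxE /=; ring.
have [p10|] := eqVneq (dot3 p1 p1) 0; last first.
  move/normalize_orthogonal; apply; rewrite dot3_mk3; first by ring.
  by rewrite -[RHS]c1 /c !mxE /=; ring.
have [p20|] := eqVneq (dot3 p2 p2) 0; last first.
  move/normalize_orthogonal; apply; rewrite dot3_mk3; first by ring.
  by rewrite -[RHS]c2 /c !mxE /=; ring.
have : dot3 p0 p0 + dot3 p1 p1 + dot3 p2 p2 = 2 * dot3 a a.
  by rewrite !dot3_mk3 !mxE /= /dot3; ring.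
by rewrite p00 p10 p20 !addr0 => /esym /eqP; rewrite mulf_eq0 pnatr_eq0 (negPf aa0).
Qed.

End Orthogonal.

Section PauliFlip.
Variable R : rcfType.
Local Notation C := R[i].

Lemma adotsE (u : 'rV[R]_3) : adots u = \matrix_(i < 2, j < 2)
  (if (i : nat) == 0%N then (if (j : nat) == 0%N then u 0 2 +i* 0 else u 0 0 +i* (- u 0 1))
   else (if (j : nat) == 0%N then u 0 0 +i* u 0 1 else (- u 0 2) +i* 0)).
Proof.
apply/matrixP => i j; rewrite !mxE.
case: i => [[|[|i]] ?] //; case: j => [[|[|j]] ?] //=; simpc.
all: by apply/eqP; rewrite eq_complex /= !eqxx.
Qed.

Lemma sum_ord2 (F : 'I_2 -> C) : \sum_(k < 2) F k = F 0 + F 1.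
Proof. by rewrite big_ord_recl big_ord1; congr (_ + F _); apply: val_inj. Qed.

Ltac entrywise :=
  rewrite !adotsE; apply/matrixP => -[[|[|?]] ?] // [[|[|?]] ?] //;
  rewrite !mxE ?sum_ord2 ?mxE ?sum_ord2 ?mxE /=; simpc;
  apply/eqP; rewrite eq_complex /=; apply/andP; split; apply/eqP; ring.

Lemma adots_sqr (u : 'rV[R]_3) : adots u *m adots u = (dot3 u u)%:C *: 1%:M.
Proof. rewrite /dot3; entrywise. Qed.

Lemma adots_sandwich (u v : 'rV[R]_3) :
  adots u *m adots v *m adots u = (2 * dot3 u v)%:C *: adots u - (dot3 u u)%:C *: adots v.
Proof. rewrite /dot3; entrywise. Qed.

Lemma madj_adots (u : 'rV[R]_3) : madj (adots u) = adots u.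
Proof. rewrite [LHS]/madj; entrywise. Qed.

Lemma eff_flip (u v : 'rV[R]_3) (o : bool) : dot3 u u = 1 -> dot3 u v = 0 ->
  adots u *m eff v o *m adots u = eff v (~~ o).
Proof.
move=> uu1 uv0; rewrite /eff -scalemxAr -scalemxAl.
rewrite (mulmxDr (adots u)) (mulmxDl _ _ (adots u)) mulmx1 -scalemxAr -scalemxAl adots_sqr adots_sandwich uu1 uv0 mulr0 scale0r sub0r scale1r.
by case: o; rewrite /= ?scaleNr ?scale1r ?scaleN1r ?opprK.
Qed.

Lemma tensmx11 m n : (1%:M : 'M[C]_m) *t (1%:M : 'M[C]_n) = 1%:M.
Proof.
apply/matrixP => i j.
case: (mxtens_indexP i) => i0 i1; case: (mxtens_indexP j) => j0 j1.
rewrite tensmxE !mxE (can_eq (@mxtens_indexK _ _)) xpair_eqE.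
by case: (i0 == j0); case: (i1 == j1); rewrite ?mulr1 ?mulr0.
Qed.

Definition flip2 (u : 'rV[R]_3) : 'M[C]_(2 * 2) := 1%:M *t adots u.

Lemma madj_flip2 u : madj (flip2 u) = flip2 u.
Proof. by rewrite /flip2 madj_tens madj1 madj_adots. Qed.

Lemma flip2_invol u : dot3 u u = 1 -> flip2 u *m flip2 u = 1%:M.
Proof. by move=> uu1; rewrite tensmx_mul mul1mx adots_sqr uu1 scale1r tensmx11. Qed.

Lemma flip2_tens u (E F : 'M[C]_2) :
  flip2 u *m (E *t F) *m flip2 u = E *t (adots u *m F *m adots u).
Proof. by rewrite /flip2 !tensmx_mul mul1mx [E *m _]mulmx1. Qed.

Lemma flip2_same_eff u v : dot3 u u = 1 -> dot3 u v = 0 ->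
  flip2 u *m same_eff v *m flip2 u = diff_eff v.
Proof.
move=> uu1 uv0; rewrite /same_eff /diff_eff (mulmxDr (flip2 u)) (mulmxDl _ _ (flip2 u)).
by congr (_ + _); rewrite flip2_tens eff_flip.
Qed.

Lemma flip2_diff_eff u v : dot3 u u = 1 -> dot3 u v = 0 ->
  flip2 u *m diff_eff v *m flip2 u = same_eff v.
Proof.
move=> uu1 uv0; have := flip2_invol uu1; rewrite -(flip2_same_eff uu1 uv0).
move: (flip2 u) (same_eff v) => W M WW.
by rewrite !mulmxA WW mul1mx -mulmxA WW mulmx1.
Qed.

Lemma conclusive_same_diff (u a b : 'rV[R]_3) (eta P : R) :
  dot3 u u = 1 -> dot3 u a = 0 -> dot3 u b = 0 ->
  conclusive eta P (same_eff b) (same_eff a) <-> conclusive eta P (diff_eff b) (diff_eff a).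
Proof.
move=> uu1 ua0 ub0.
have unitary : madj (flip2 u) *m flip2 u = 1%:M by rewrite madj_flip2 flip2_invol.
split; apply: conclusive_unitary unitary _ _; rewrite madj_flip2.
- exact: flip2_diff_eff.
- exact: flip2_diff_eff.
- exact: flip2_same_eff.
- exact: flip2_same_eff.
Qed.

End PauliFlip.

Theorem proposition4 (R : rcfType) (a b : 'rV[R]_3) (eta P : R) :
  unit3 a -> unit3 b -> 0 <= eta <= 1 -> 0 <= P <= 1 ->
  (exists psi : 'cV[R[i]]_(2 * 2),
      is_unit_vec psi /\ expect psi (same_eff b) = 0 /\
      eta%:C * expect psi (same_eff a) = P%:C)
  <->
  (exists psi' : 'cV[R[i]]_(2 * 2),
      is_unit_vec psi' /\ expect psi' (diff_eff b) = 0 /\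
      eta%:C * expect psi' (diff_eff a) = P%:C).
Proof.
move=> /unit3_dot3 aa1 _ _ _.
have [|u [uu1 ua0 ub0]] := exists_unit_orthogonal2 b (_ : dot3 a a != 0).
  by rewrite aa1 oner_neq0.
exact: conclusive_same_diff uu1 ua0 ub0.
Qed.
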